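(* Let $G$ be a finite Abelian group of order $n$, $H$ its Fourier matrix (rows and columns indexed by $G$), and $A$ an $n\times n$ flat matrix with rows $(R_i)_{i\in G}$ and columns $v_1,\dots,v_n$. For $r=1,\dots,n$ let $M_r=\frac1{\sqrt n}\operatorname{diag}(v_r)H$. Then $\{M_1,\dots,M_n\}$ is a complete system of mutually unbiased Hadamards if and only if for every nonzero $\Delta\in G$ the matrix $D_\Delta$ whose rows are $R_{i+\Delta}\circ R_i^{(-1)}$, $i\in G$, has pairwise orthogonal rows.
   Context: A flat matrix is a complex matrix all of whose entries have absolute value $1$. Writing $G=\mathbb{Z}_{d_1}\times\cdots\times\mathbb{Z}_{d_m}$, the Fourier matrix is $(\chi_j(i))_{i,j\in G}$ with $\chi_a(b)=\exp(\sum_j\frac{2\pi i}{d_j}a_jb_j)$. $\circ$ is the entrywise product and $R^{(-1)}$ the entrywise inverse. A complex Hadamard matrix is a unitary $n\times n$ matrix all of whose entries have absolute value $1/\sqrt n$; two are mutually unbiased if $|\langle x|y\rangle|=1/\sqrt n$ for every column $x$ of one and column $y$ of the other ($\langle x|y\rangle=\sum_t\overline{x_t}y_t$); a complete system of mutually unbiased Hadamards is a set of $n$ pairwise mutually unbiased complex Hadamard $n\times n$ matrices. *)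

From HB Require Import structures.
From mathcomp Require Import all_boot all_order all_algebra all_field.
Set Implicit Arguments. Unset Strict Implicit. Unset Printing Implicit Defensive.
Import Order.TTheory GRing.Theory Num.Theory.
Local Open Scope ring_scope.

(* G = Z_{d_1} x ... x Z_{d_m} with d_j = (e j).+1 >= 1 *)
Definition Grp (m : nat) (e : 'I_m -> nat) : finType :=
  {dffun forall j : 'I_m, 'I_(e j).+1}.

Definition addG m e (x y : Grp e) : Grp e :=
  @finfun 'I_m (fun j => 'I_(e j).+1) (fun j => (x j + y j)%R).

Definition zeroG m (e : 'I_m -> nat) : Grp e :=
  @finfun 'I_m (fun j => 'I_(e j).+1) (fun j => 0%R).

(* exp(2 pi i / d): d.-root (-1) is exp(i pi / d) (minimal nonnegative argument) *)
Definition omega (d : nat) : algC := (d.-root (-1)) ^+ 2.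

(* Fourier matrix: H a b = chi_b(a) = exp(sum_j 2 pi i a_j b_j / d_j) *)
Definition fourier m (e : 'I_m -> nat) (a b : Grp e) : algC :=
  \prod_(j < m) omega (e j).+1 ^+ ((a j : nat) * (b j : nat)).

(* matrices with rows/columns indexed by a finite type, as functions *)
Definition inner (T : finType) (x y : T -> algC) : algC :=
  \sum_(t : T) (x t)^* * y t.

Definition flat (I J : finType) (A : I -> J -> algC) : Prop :=
  forall i j, `|A i j| = 1.

Definition unitary (T : finType) (M : T -> T -> algC) : Prop :=
  forall j k, inner (fun t => M t j) (fun t => M t k) = (j == k)%:R.

Definition complex_hadamard (T : finType) (M : T -> T -> algC) : Prop :=
  unitary M /\ forall i j, `|M i j| = (sqrtC (#|T|%:R))^-1.

Definition mutually_unbiased (T : finType) (M N : T -> T -> algC) : Prop :=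
  forall j k, `|inner (fun t => M t j) (fun t => N t k)| = (sqrtC (#|T|%:R))^-1.

Definition complete_MUH (T : finType) (Ms : T -> T -> T -> algC) : Prop :=
  (forall r, complex_hadamard (Ms r)) /\
  (forall r s, r != s -> mutually_unbiased (Ms r) (Ms s)).

Definition rows_pairwise_orthogonal (I J : finType) (D : I -> J -> algC) : Prop :=
  forall i i', i != i' -> inner (D i) (D i') = 0.

Definition Mr m (e : 'I_m -> nat) (A : Grp e -> Grp e -> algC) (r : Grp e)
  : Grp e -> Grp e -> algC :=
  fun i j => (sqrtC (#|Grp e|%:R))^-1 * (A i r * fourier i j).

Definition Dmat m (e : 'I_m -> nat) (A : Grp e -> Grp e -> algC) (dl : Grp e)
  : Grp e -> Grp e -> algC :=
  fun i r => A (addG i dl) r * (A i r)^-1.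

From HB Require Import structures.
From mathcomp Require Import all_boot all_order all_algebra all_field zify ring.
Set Implicit Arguments. Unset Strict Implicit. Unset Printing Implicit Defensive.
Import Order.TTheory GRing.Theory Num.Theory.
Local Open Scope ring_scope.

(* Writing w_rs(t) = conj(A t r) * A t s for two columns r, s of A, the inner
   product of column j of M_r with column k of M_s is n^-1 times the twisted
   character sum  W(j,k) = sum_t w_rs(t) conj(chi_j(t)) chi_k(t).  By the
   Wiener-Khinchin identity |W(j,k)|^2 = sum_dl conj(chi_j(dl)) chi_k(dl) C(dl),
   where C is the autocorrelation of w_rs; Fourier inversion then shows that
   |W(j,k)| = sqrt n for all j, k iff C(dl) = 0 for all dl <> 0.  Finally
   C(dl) is the inner product of columns r and s of D_dl, and a flat square
   matrix has orthogonal columns iff it has orthogonal rows. *)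

Lemma unit_conjM (x : algC) : `|x| = 1 -> x^* * x = 1.
Proof. by move=> nx; rewrite -normCKC nx expr1n. Qed.

Lemma unit_conj (x : algC) : `|x| = 1 -> x^* = x^-1.
Proof. by move=> nx; rewrite invC_norm nx expr1n invr1 mul1r. Qed.

Lemma unity_norm (x : algC) n : (0 < n)%N -> `|x ^+ n| = 1 -> `|x| = 1.
Proof. by move=> n0 nxn; apply/eqP; rewrite -(pexpr_eq1 n0) // -normrX nxn. Qed.

Lemma unit_conjM_eq1 (x y : algC) : `|x| = 1 -> (x^* * y == 1) = (y == x).
Proof.
move=> nx; have x0 : x != 0 by rewrite -normr_eq0 nx oner_eq0.
by rewrite unit_conj // -(inj_eq (mulfI x0)) mulrA mulfV // mul1r mulr1.
Qed.

Lemma neq_N1_1 : (-1 : algC) != 1.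
Proof. by rewrite lt_eqF // (lt_trans (ltrN10 _) ltr01). Qed.

Lemma sum_root_unity (q : algC) g : q ^+ g = 1 -> q != 1 ->
  \sum_(k < g) q ^+ k = 0.
Proof.
move=> qg q1; apply/eqP; have := subrX1 q g.
by rewrite qg subrr => /esym/eqP; rewrite mulf_eq0 subr_eq0 (negbTE q1).
Qed.

Lemma prim_root_orth (rho : algC) g (i j : 'I_g) : g.-primitive_root rho ->
  \sum_(k < g) (rho ^+ k) ^+ i * ((rho ^+ k) ^+ j)^* = if i == j then g%:R else 0.
Proof.
move=> pr; have g0 := prim_order_gt0 pr.
have nr : `|rho| = 1 by apply: (unity_norm g0); rewrite prim_expr_order ?normr1.
have nrp k : `|rho ^+ k| = 1 by rewrite normrX nr expr1n.
have qk k : (rho ^+ k) ^+ i * ((rho ^+ k) ^+ j)^* = (rho ^+ i * (rho ^+ j)^*) ^+ k.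
  by rewrite exprMn -rmorphXn -!exprM (mulnC i) (mulnC j).
under eq_bigr do rewrite qk.
have [<-|nij] := eqVneq i j.
  rewrite mulrC unit_conjM ?nrp //=.
  by under eq_bigr do rewrite expr1n; rewrite sumr_const card_ord.
rewrite /= sum_root_unity //.
  by rewrite exprMn -rmorphXn -!exprM mulnC exprM (prim_expr_order pr)
     mulnC exprM (prim_expr_order pr) !expr1n rmorph1 mulr1.
by rewrite mulrC unit_conjM_eq1 // (eq_prim_root_expr pr) !modn_small ?ltn_ord.
Qed.

Lemma unit_dist1 (b : algC) : `|b| = 1 -> `|1 - b| ^+ 2 = 2 - 2 * 'Re b.
Proof.
move=> nb; rewrite normCKC rmorphB rmorph1 ReE [2 * _]mulrC divfK ?pnatr_eq0 //.
by rewrite mulrBl !mulrBr !mul1r mulr1 unit_conjM // opprB opprD addrACA addrA.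
Qed.

(* If b^g = y <> 1 and Re b <= Re y, then |1 + b + ... + b^(g-1)| <= 1,
   since (1 - b) times this sum is 1 - y and |1 - y| <= |1 - b|. *)
Lemma geom_sum_le1 (b y : algC) g : `|b| = 1 -> y != 1 -> b ^+ g = y ->
  'Re b <= 'Re y -> `|\sum_(i < g) b ^+ i| <= 1.
Proof.
move=> nb y1 bg Rby.
have ny : `|y| = 1 by rewrite -bg normrX nb expr1n.
have Sb : (1 - b) * \sum_(i < g) b ^+ i = 1 - y.
  by rewrite -opprB mulNr -subrX1 bg opprB.
have dy : 0 < `|1 - y| by rewrite normr_gt0 subr_eq0 eq_sym.
have dyb : `|1 - y| <= `|1 - b|.
  rewrite -(ler_pXn2r (_ : 0 < 2)%N) ?nnegrE // !unit_dist1 //.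
  by rewrite lerD2l lerN2 ler_pM2l ?ltr0n.
by rewrite -(ler_pM2l (lt_le_trans dy dyb)) mulr1 -normrM Sb.
Qed.

Lemma parseval_roots (a rho : algC) g : `|a| = 1 -> g.-primitive_root rho ->
  \sum_(k < g) `|\sum_(i < g) (a * rho ^+ k) ^+ i| ^+ 2 = (g * g)%:R.
Proof.
move=> na pr.
have expand k : `|\sum_(i < g) (a * rho ^+ k) ^+ i| ^+ 2 = \sum_(i < g) \sum_(j < g)
    a ^+ i * (a ^+ j)^* * ((rho ^+ k) ^+ i * ((rho ^+ k) ^+ j)^*).
  rewrite normCK rmorph_sum big_distrlr /=; apply: eq_bigr => i _.
  by apply: eq_bigr => j _; rewrite !exprMn rmorphM mulrACA.
under eq_bigr do rewrite expand.
rewrite exchange_big (eq_bigr (fun=> g%:R)) ?sumr_const ?card_ord ?natrM ?mulr_natr //.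
move=> i _; rewrite exchange_big (bigD1 i) //= [X in _ + X]big1 ?addr0.
  by rewrite -mulr_sumr prim_root_orth // eqxx -normCK normrX na !expr1n mul1r.
by move=> j nji; rewrite -mulr_sumr prim_root_orth // eq_sym (negbTE nji) mulr0.
Qed.

(* Every unimodular y <> 1 has a g-th root (g > 1) of strictly larger real
   part: otherwise each |S(b_k)|^2 <= 1, contradicting Parseval. *)
Lemma larger_root (y : algC) g : `|y| = 1 -> y != 1 -> (1 < g)%N ->
  exists2 z, z ^+ g = y & 'Re y < 'Re z.
Proof.
move=> ny y1 g1; have g0 := ltnW g1.
have [rho pr] := C_prim_root_exists g0.
pose a := g.-root y; have ag : a ^+ g = y := rootCK g0 y.
have na : `|a| = 1 by apply: (unity_norm g0); rewrite ag.
pose b (k : 'I_g) := a * rho ^+ k.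
have bg k : b k ^+ g = y by rewrite exprMn exprAC (prim_expr_order pr) expr1n mulr1.
have [k Rk|Rle] := pickP (fun k => 'Re y < 'Re (b k)); first by exists (b k).
have Sle k : `|\sum_(i < g) b k ^+ i| ^+ 2 <= 1.
  rewrite expr_le1 // (geom_sum_le1 _ y1 (bg k)) ?real_leNgt ?Creal_Re ?Rle //.
  by apply: (unity_norm g0); rewrite bg.
have : (g * g)%:R <= g%:R :> algC.
  rewrite -(parseval_roots na pr); apply: le_trans (ler_sum _ (fun k _ => Sle k)) _.
  by rewrite sumr_const card_ord.
by rewrite ler_nat; nia.
Qed.

(* The principal root d.-root (-1) has the largest real part among all the
   d-th roots of -1 (use the conjugate for roots in the lower half-plane). *)
Lemma rootCN1_Re_max d (z : algC) : (0 < d)%N -> z ^+ d = -1 ->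
  'Re z <= 'Re (d.-root (-1)).
Proof.
move=> d0 zd; have [Imz|Imz] := real_ge0P (Creal_Im z); first exact: rootC_Re_max.
rewrite -Re_conj; apply: rootC_Re_max d0 _ _; first by rewrite -rmorphXn zd rmorphN1.
by rewrite Im_conj oppr_ge0 ltW.
Qed.

(* d.-root (-1) is a primitive 2d-th root of unity: if its order were
   2d' with d' a proper divisor of d, a (d/d')-th root of it given by
   larger_root would be a d-th root of -1 of larger real part. *)
Lemma rootCN1_prim d : (0 < d)%N -> (d.*2).-primitive_root (d.-root (-1 : algC)).
Proof.
move=> d0; have d2_0 : (0 < d.*2)%N by rewrite double_gt0.
set y := d.-root _; have yd : y ^+ d = -1 := rootCK d0 _.
have y2d : y ^+ d.*2 = 1 by rewrite -addnn exprD yd mulrNN mulr1.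
have [m pm m_dvd] := prim_order_exists d2_0 y2d.
have m0 := prim_order_gt0 pm.
have m_ndvd : ~~ (m %| d)%N by rewrite (prim_order_dvd pm) yd neq_N1_1.
have m_even : ~~ odd m.
  by apply: contra m_ndvd => om; move: m_dvd; rewrite -muln2 Gauss_dvdl ?coprimen2.
set d' := m./2; have md' : m = d'.*2 by rewrite -[m]odd_double_half (negbTE m_even).
have d'_dvd : (d' %| d)%N by move: m_dvd; rewrite md' -!muln2 dvdn_pmul2r.
have yd' : y ^+ d' = -1.
  have : (y ^+ d') ^+ 2 = 1 by rewrite -exprM muln2 -md' prim_expr_order.
  move/eqP; rewrite sqrf_eq1 => /orP[/eqP yd'1|/eqP //].
  have := prim_order_dvd pm d'; rewrite yd'1 eqxx md' => /dvdn_leq.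
  by rewrite md' in m0; lia.
suff d'_eq : d' = d by rewrite md' d'_eq in pm.
apply/eqP; apply: contraT => d'_neq.
have ny : `|y| = 1 by apply: (unity_norm d2_0); rewrite y2d normr1.
have y1 : y != 1.
  by apply/eqP => y1; move: yd; rewrite y1 expr1n => /eqP; rewrite eq_sym (negbTE neq_N1_1).
have g1 : (1 < d %/ d')%N.
  by rewrite ltn_divRL // mul1n ltn_neqAle d'_neq (dvdn_leq d0 d'_dvd).
have [z zg yz] := larger_root ny y1 g1.
have zd : z ^+ d = -1 by rewrite -(divnK d'_dvd) exprM zg yd'.
by have := rootCN1_Re_max d0 zd; rewrite -/y real_leNgt ?Creal_Re ?yz.
Qed.

Lemma omega_prim d : (0 < d)%N -> d.-primitive_root (omega d).
Proof.
by move=> d0; have := exp_prim_root (rootCN1_prim d0) 2; rewrite -muln2 gcdnMl mulnK.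
Qed.

Section Characters.
Variables (m : nat) (e : 'I_m -> nat).
Local Notation G := (Grp e).

Lemma addGE (x y : G) j : addG x y j = (x j + y j)%R.
Proof. by rewrite /addG ffunE. Qed.

Lemma zeroGE j : zeroG e j = 0%R.
Proof. by rewrite /zeroG ffunE. Qed.

Lemma addGC (x y : G) : addG x y = addG y x.
Proof. by apply/ffunP => j; rewrite !addGE addrC. Qed.

Lemma addG0 (t : G) : addG t (zeroG e) = t.
Proof. by apply/ffunP => j; rewrite addGE zeroGE addr0. Qed.

Lemma addG_inj (u : G) : injective (fun t : G => addG t u).
Proof.
move=> t t' /(congr1 (fun f : G => f _)) E; apply/ffunP => j.
by have := E j; rewrite !addGE => /addIr.
Qed.

Lemma fourier_add (a b c : G) : fourier (addG a b) c = fourier a c * fourier b c.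
Proof.
rewrite /fourier -big_split /=; apply: eq_bigr => j _.
have omega_d := prim_expr_order (omega_prim (ltn0Sn (e j))).
rewrite addGE -exprD -mulnDl.
by rewrite -[LHS](expr_mod _ omega_d) -[RHS](expr_mod _ omega_d) /= modnMml.
Qed.

Lemma fourier_sym (a b : G) : fourier a b = fourier b a.
Proof. by apply: eq_bigr => j _; rewrite mulnC. Qed.

Lemma fourier0 (t : G) : fourier t (zeroG e) = 1.
Proof. by rewrite /fourier big1 // => j _; rewrite zeroGE muln0 expr0. Qed.

Lemma fourier_norm (a b : G) : `|fourier a b| = 1.
Proof.
rewrite /fourier; elim/big_rec: _ => [|j x _ IH]; first by rewrite normr1.
have omega_d := prim_expr_order (omega_prim (ltn0Sn (e j))).
have omega_norm : `|omega (e j).+1| = 1.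
  by apply: (unity_norm (ltn0Sn (e j))); rewrite omega_d normr1.
by rewrite normrM IH normrX omega_norm expr1n mulr1.
Qed.

(* Characters separate points: the indicator of a coordinate where a and b
   differ yields u with chi_a(u) <> chi_b(u), as omega is primitive. *)
Lemma characters_separate (a b : G) : a != b -> exists u : G, fourier u a != fourier u b.
Proof.
move=> nab; have [j hj] : exists j, a j != b j.
  by apply/existsP; apply: contraR nab => /existsPn H; apply/eqP/ffunP => j; apply/eqP/negPn.
have ej : (0 < e j)%N.
  by rewrite -ltnS -[X in (_ < X)%N]card_ord; apply/card_gt1P; exists (a j), (b j).
pose u : G := [ffun i => if i == j then inord 1 else 0%R].
exists u; have fu c : fourier u c = omega (e j).+1 ^+ c j.
  rewrite /fourier (bigD1 j) //= big1 ?mulr1 => [|i /negbTE nij]; rewrite ffunE.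
    by rewrite eqxx inordK ?mul1n.
  by rewrite nij mul0n expr0.
by rewrite !fu (eq_prim_root_expr (omega_prim (ltn0Sn (e j)))) !modn_small ?ltn_ord.
Qed.

(* Orthogonality of characters: translating by a separating u multiplies
   the sum by conj(chi_a(u)) chi_b(u) <> 1, so the sum vanishes. *)
Lemma fourier_orth (a b : G) :
  \sum_t (fourier t a)^* * fourier t b = (a == b)%:R * #|G|%:R.
Proof.
have [<-|nab] := eqVneq a b.
  rewrite mul1r (eq_bigr (fun _ => 1)) ?sumr_const // => t _.
  exact/unit_conjM/fourier_norm.
have [u hu] := characters_separate nab; rewrite mul0r.
set S := \sum_t _; set c := (fourier u a)^* * fourier u b.
have S_shift : S = c * S.
  rewrite {1}/S (reindex_inj (@addG_inj u)) mulr_sumr; apply: eq_bigr => t _.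
  by rewrite !fourier_add rmorphM mulrACA mulrC.
have c1 : c != 1 by rewrite unit_conjM_eq1 ?fourier_norm // eq_sym.
apply/eqP; move/eqP: S_shift; rewrite -subr_eq0 -{1}[S]mul1r -mulrBl mulf_eq0.
by rewrite subr_eq0 eq_sym (negbTE c1).
Qed.

End Characters.

Section FlatWeights.
Variables (m : nat) (e : 'I_m -> nat).
Local Notation G := (Grp e).
Local Notation n := (#|G|%:R : algC).

Lemma card_G_neq0 : n != 0.
Proof. by rewrite pnatr_eq0 -lt0n; apply/card_gt0P; exists (zeroG e). Qed.

Lemma fourier_neq0 (a b : G) : fourier a b != 0.
Proof. by rewrite -normr_eq0 fourier_norm oner_eq0. Qed.

Lemma fourier_inversion (f : G -> algC) (a : G) :
  \sum_k (fourier k a)^* * \sum_dl fourier k dl * f dl = n * f a.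
Proof.
transitivity (\sum_dl (\sum_k (fourier k a)^* * fourier k dl) * f dl).
  under eq_bigr do rewrite mulr_sumr; rewrite exchange_big; apply: eq_bigr => dl _.
  by rewrite mulr_suml; apply: eq_bigr => k _; rewrite mulrA.
rewrite (bigD1 a) //= [X in _ + X]big1 ?addr0 => [|dl dla]; rewrite fourier_orth.
  by rewrite eqxx mul1r.
by rewrite eq_sym (negbTE dla) !mul0r.
Qed.

Variable w : G -> algC.

(* Twisted character sum of w; for w = w_rs it is n times an inner product
   of columns of M_r and M_s. *)
Definition wsum (j k : G) : algC := \sum_t w t * (fourier t j)^* * fourier t k.

Definition autocorr (dl : G) : algC := \sum_t (w t)^* * w (addG t dl).

Lemma wsum_norm2 j k :
  `|wsum j k| ^+ 2 = \sum_dl (fourier dl j)^* * fourier dl k * autocorr dl.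
Proof.
rewrite normCKC /wsum rmorph_sum mulr_suml.
under eq_bigr => t _ do rewrite mulr_sumr (reindex_inj (@addG_inj _ _ t)) /=.
rewrite exchange_big; apply: eq_bigr => dl _; rewrite /autocorr mulr_sumr.
apply: eq_bigr => t _; rewrite (addGC dl t) !fourier_add !rmorphM /= conjCK.
by rewrite !(unit_conj (fourier_norm _ _)); field; rewrite !fourier_neq0.
Qed.

Hypothesis w_flat : forall t, `|w t| = 1.

Lemma autocorr0 : autocorr (zeroG e) = n.
Proof.
rewrite /autocorr (eq_bigr (fun _ => 1)) ?sumr_const // => t _.
by rewrite addG0 unit_conjM.
Qed.

Lemma flat_spectrum_iff :
  (forall j k, `|wsum j k| = sqrtC n) <-> (forall dl, dl != zeroG e -> autocorr dl = 0).
Proof.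
split=> [flat_ws dl ndl | autocorr_eq0 j k].
  have transform k : \sum_t fourier k t * autocorr t = n.
    have := wsum_norm2 (zeroG e) k; rewrite flat_ws sqrtCK => ->.
    by apply: eq_bigr => t _; rewrite fourier0 rmorph1 mul1r fourier_sym.
  have := fourier_inversion autocorr dl; under eq_bigr do rewrite transform.
  have -> : \sum_k (fourier k dl)^* * n = 0.
    rewrite -mulr_suml; under eq_bigr => k _ do rewrite -[_^*]mulr1 -(fourier0 k).
    by rewrite fourier_orth (negbTE ndl) !mul0r.
  by move/esym/eqP; rewrite mulf_eq0 (negbTE card_G_neq0) => /eqP.
suff : `|wsum j k| ^+ 2 = n by move=> <-; rewrite exprCK.
rewrite wsum_norm2 (bigD1 (zeroG e)) //= big1 ?addr0 => [|dl ndl].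
  by rewrite fourier_sym fourier0 fourier_sym fourier0 rmorph1 !mul1r autocorr0.
by rewrite autocorr_eq0 // mulr0.
Qed.

End FlatWeights.

(* A flat square matrix with pairwise orthogonal columns has pairwise
   orthogonal rows: n^-1 D^* is then a left, hence right, inverse of D. *)
Lemma flat_rows_orthogonal (T : finType) (D : T -> T -> algC) :
  flat D -> rows_pairwise_orthogonal (fun r i => D i r) -> rows_pairwise_orthogonal D.
Proof.
move=> flatD cols i i' ii'.
have k0 : (#|T|%:R : algC) != 0 by rewrite pnatr_eq0 -lt0n; apply/card_gt0P; exists i.
have colsE r s : \sum_t (D t r)^* * D t s = (r == s)%:R * #|T|%:R.
  have [<-|rs] := eqVneq r s; last by rewrite mul0r; apply: cols.
  by rewrite mul1r (eq_bigr (fun=> 1)) ?sumr_const // => t _; apply: unit_conjM.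
pose N : 'M[algC]_#|T| := \matrix_(p, q) D (enum_val p) (enum_val q).
pose N' : 'M[algC]_#|T| := \matrix_(p, q) (#|T|%:R^-1 * (D (enum_val q) (enum_val p))^*).
have N'N : N' *m N = 1%:M.
  apply/matrixP => p q; rewrite !mxE; under eq_bigr do rewrite !mxE -mulrA.
  rewrite -mulr_sumr -(big_enum_val (fun t => (D t _)^* * D t _)) colsE.
  by rewrite (inj_eq enum_val_inj) mulrCA mulVf // mulr1; case: (p == q).
have rows0 : \sum_r D i r * (D i' r)^* = 0.
  have := congr1 (fun M : 'M[algC]_#|T| => M (enum_rank i) (enum_rank i')) (mulmx1C N'N).
  rewrite !mxE (inj_eq enum_rank_inj) (negbTE ii') /=.
  under eq_bigr do rewrite !mxE mulrCA.
  rewrite -mulr_sumr => /eqP; rewrite mulf_eq0 invr_eq0 (negbTE k0) /= !enum_rankK.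
  by rewrite -(big_enum_val (fun t => D i t * (D i' t)^*)) => /eqP.
apply/eqP; rewrite -conjC_eq0 /inner rmorph_sum; apply/eqP.
rewrite -[RHS]rows0; apply: eq_bigr => t _.
by rewrite rmorphM /= conjCK mulrC.
Qed.

Section MutuallyUnbiased.
Variables (m : nat) (e : 'I_m -> nat) (A : Grp e -> Grp e -> algC).
Hypothesis hA : flat A.
Local Notation G := (Grp e).
Local Notation n := (#|G|%:R : algC).
Local Notation sn := (sqrtC (#|G|%:R : algC)).

Lemma A_neq0 i j : A i j != 0.
Proof. by rewrite -normr_eq0 hA oner_eq0. Qed.

Definition colweight (r s t : G) : algC := (A t r)^* * A t s.

Lemma colweight_flat r s t : `|colweight r s t| = 1.
Proof. by rewrite normrM norm_conjC !hA mulr1. Qed.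

Lemma card_invE : n^-1 = sn^-1 * sn^-1.
Proof. by rewrite -invfM -expr2 sqrtCK. Qed.

Lemma inner_Mr r s j k :
  inner (fun t => Mr A r t j) (fun t => Mr A s t k) = n^-1 * wsum (colweight r s) j k.
Proof.
rewrite /inner /wsum mulr_sumr; apply: eq_bigr => t _.
rewrite /Mr /colweight !rmorphM /= geC0_conj ?invr_ge0 ?sqrtC_ge0 ?ler0n // card_invE.
by ring.
Qed.

Lemma Mr_hadamard r : complex_hadamard (Mr A r).
Proof.
split=> [j k | i j].
  rewrite inner_Mr /wsum (eq_bigr (fun t => (fourier t j)^* * fourier t k)) => [|t _].
    by rewrite fourier_orth mulrCA mulVf ?card_G_neq0 ?mulr1.
  by rewrite /colweight unit_conjM ?hA // mul1r.
by rewrite /Mr !normrM fourier_norm hA !mulr1 ger0_norm // invr_ge0 sqrtC_ge0 ler0n.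
Qed.

Lemma Mr_unbiased_iff r s : mutually_unbiased (Mr A r) (Mr A s) <->
  (forall j k, `|wsum (colweight r s) j k| = sn).
Proof.
have sn0 : sn != 0 by rewrite sqrtC_eq0 card_G_neq0.
have scale x : n^-1 * x = sn^-1 <-> x = sn.
  rewrite card_invE; split=> [h|->]; last by field.
  by apply: (mulfI (mulf_neq0 (invr_neq0 sn0) (invr_neq0 sn0))); rewrite h; field.
have normE j k : `|inner (fun t => Mr A r t j) (fun t => Mr A s t k)| =
    n^-1 * `|wsum (colweight r s) j k|.
  by rewrite inner_Mr normrM ger0_norm // invr_ge0 ler0n.
by split=> H j k; [apply/scale; rewrite -normE | rewrite normE; apply/scale].
Qed.

Lemma autocorr_Dmat r s dl :
  autocorr (colweight r s) dl = inner (fun t => Dmat A dl t r) (fun t => Dmat A dl t s).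
Proof.
apply: eq_bigr => t _; rewrite /colweight /Dmat !rmorphM /= fmorphV /= conjCK.
by rewrite !(unit_conj (hA _ _)); field; rewrite !A_neq0.
Qed.

Lemma Dmat_flat dl : flat (Dmat A dl).
Proof. by move=> i r; rewrite /Dmat normrM normfV !hA invr1 mulr1. Qed.

End MutuallyUnbiased.

Theorem mainTheorem13 (m : nat) (e : 'I_m -> nat)
  (A : Grp e -> Grp e -> algC) (hA : flat A) :
  complete_MUH (fun r => Mr A r) <->
  (forall dl : Grp e, dl != zeroG e -> rows_pairwise_orthogonal (Dmat A dl)).
Proof.
split=> [[_ unbiased] dl ndl | Dorth].
  apply: flat_rows_orthogonal (Dmat_flat hA dl) _ => r s rs.
  rewrite -autocorr_Dmat //; apply: (flat_spectrum_iff (colweight_flat hA r s)).1 _ dl ndl.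
  exact: (Mr_unbiased_iff A r s).1 (unbiased r s rs).
split=> [r | r s rs]; first exact: Mr_hadamard.
apply/(Mr_unbiased_iff A r s)/(flat_spectrum_iff (colweight_flat hA r s)) => dl ndl.
rewrite autocorr_Dmat //.
apply: (@flat_rows_orthogonal _ (fun r t => Dmat A dl t r)) rs; last exact: Dorth.
by move=> t r'; apply: Dmat_flat.
Qed.
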